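(* Let $0\leq B<1$, $q\geq3$, $\Delta\geq3$, and $d=\Delta-1$. If $B\geq\frac{\Delta-q}{\Delta}$, then every positive solution $R_1,\dots,R_q,C_1,\dots,C_q>0$ of the system \[R_i\propto\Big(BC_i+\sum_{j\neq i}C_j\Big)^{d},\qquad C_j\propto\Big(BR_j+\sum_{i\neq j}R_i\Big)^{d}\qquad(i,j\in[q])\] (proportionality constants independent of $i$, resp. $j$) satisfies $R_1=\dots=R_q$ and $C_1=\dots=C_q$.
   Context: This system is the tree recursion (fixpoint) system for the antiferromagnetic $q$-state Potts model with parameter $B$ on the $\Delta$-regular tree; $B=0$ corresponds to $q$-colorings. *)

From mathcomp Require Import all_boot all_order all_algebra.
Set Implicit Arguments. Unset Strict Implicit. Unset Printing Implicit Defensive.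
Import Order.TTheory GRing.Theory Num.Theory.
Local Open Scope ring_scope.

Definition potts_rhs (R : realFieldType) (q d : nat) (B : R) (X : 'I_q -> R)
  (i : 'I_q) : R :=
  (B * X i + \sum_(j < q | j != i) X j) ^+ d.

Definition proportional (R : realFieldType) (q : nat) (f g : 'I_q -> R) : Prop :=
  exists lambda : R, 0 < lambda /\ forall i, f i = lambda * g i.

(* Write b = 1 - B and d = Delta - 1, so that R_i = lam (S - b C_i)^d and
   C_j = mu (T - b R_j)^d with S = sum C, T = sum R, and the hypothesis on B
   reads b (d + 1) <= q.  For a map t |-> lam (s - b t)^d and u < v, the
   trapezoid inequality for the strictly convex t^d, i.e.
   2 (c^(d+1) - a^(d+1)) < (d+1) (c - a) (c^d + a^d) for 0 <= a < c,
   yields a strict inequality between the two values of the map.  Adding the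
   instances for C |-> R and R |-> C, the terms in b cancel and what is left
   says that C_k < C_i forces
     D(i,k) = q (C_i R_k - C_k R_i) - S (R_k - R_i) - T (C_i - C_k) > 0.
   Since sum_k D(i,k) = 0, no C_k can lie below the maximum C_i. *)

From mathcomp Require Import all_boot all_order all_algebra.
From mathcomp Require Import reals.
From mathcomp Require Import ring lra.
Set Implicit Arguments. Unset Strict Implicit. Unset Printing Implicit Defensive.
Import Order.TTheory GRing.Theory Num.Theory.
Local Open Scope ring_scope.

Lemma sum_expr_cross (R : comPzRingType) (a c : R) (d : nat) :
  \sum_(k < d.+1) (c ^+ (d - k) - a ^+ (d - k)) * (c ^+ k - a ^+ k) =
  d.+1%:R * (c ^+ d + a ^+ d) - 2 * \sum_(k < d.+1) c ^+ (d - k) * a ^+ k.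
Proof.
have split_term (k : 'I_d.+1) : (c ^+ (d - k) - a ^+ (d - k)) * (c ^+ k - a ^+ k) =
    (c ^+ d + a ^+ d) - c ^+ (d - k) * a ^+ k - a ^+ (d - k) * c ^+ k.
  rewrite -[in c ^+ d](subnK (leq_ord k)) -[in a ^+ d](subnK (leq_ord k)) !exprD.
  by move: (c ^+ (d - k)) (c ^+ k) (a ^+ (d - k)) (a ^+ k) => x y z w; ring.
have rev_sum : \sum_(k < d.+1) a ^+ (d - k) * c ^+ k =
    \sum_(k < d.+1) c ^+ (d - k) * a ^+ k.
  rewrite (reindex_inj rev_ord_inj) /=; apply: eq_bigr => k _.
  by rewrite subSS subKn ?leq_ord // mulrC.
rewrite (eq_bigr _ (fun k _ => split_term k)) !sumrB rev_sum sumr_const card_ord.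
move: (\sum_(k < d.+1) _) (c ^+ d) (a ^+ d) => s x y.
by rewrite -mulr_natl; ring.
Qed.

Lemma expr_trapezoid (R : realFieldType) (a c : R) (d : nat) :
  0 <= a -> a < c -> (1 < d)%N ->
  2 * (c ^+ d.+1 - a ^+ d.+1) < d.+1%:R * (c - a) * (c ^+ d + a ^+ d).
Proof.
move=> a0 ac d1; have c0 : 0 <= c by lra.
have diff_ge0 k : 0 <= c ^+ k - a ^+ k by rewrite subr_ge0 lerXn2r ?nnegrE // ltW.
have cross_gt0 : 0 < \sum_(k < d.+1) (c ^+ (d - k) - a ^+ (d - k)) * (c ^+ k - a ^+ k).
  rewrite (bigD1 (Ordinal (ltnW d1 : 1 < d.+1)%N)) //=.
  apply: ltr_pwDl; last by apply: sumr_ge0 => k _; apply: mulr_ge0.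
  by apply: mulr_gt0; rewrite subr_gt0 ltrXn2r // subn_eq0 -ltnNge.
rewrite sum_expr_cross in cross_gt0.
rewrite subrXX -subr_gt0 /=.
set s := \sum_(k < d.+1) _ in cross_gt0 *.
have -> : d.+1%:R * (c - a) * (c ^+ d + a ^+ d) - 2 * ((c - a) * s) =
    (c - a) * (d.+1%:R * (c ^+ d + a ^+ d) - 2 * s) by ring.
by rewrite mulr_gt0 // subr_gt0.
Qed.

Lemma power_map_gap (R : realFieldType) (lam b s q u v : R) (d : nat) :
  0 < lam -> 0 < b -> (1 < d)%N -> b * d.+1%:R <= q ->
  0 <= s - b * v -> u < v ->
  2 * ((s - b * u) * (lam * (s - b * u) ^+ d) - (s - b * v) * (lam * (s - b * v) ^+ d))
    < q * (v - u) * (lam * (s - b * u) ^+ d + lam * (s - b * v) ^+ d).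
Proof.
move=> lam_gt0 b_gt0 d_gt1 bd_le_q base_ge0 uv.
set c := s - b * u; set a := s - b * v.
have ca : c - a = b * (v - u) by rewrite /c /a; ring.
have ac : a < c by rewrite -subr_gt0 ca mulr_gt0 // subr_gt0.
have trap := expr_trapezoid base_ge0 ac d_gt1.
have -> : 2 * (c * (lam * c ^+ d) - a * (lam * a ^+ d)) =
    lam * (2 * (c ^+ d.+1 - a ^+ d.+1)) by rewrite !exprS; ring.
have -> : q * (v - u) * (lam * c ^+ d + lam * a ^+ d) =
    q * (v - u) * (lam * (c ^+ d + a ^+ d)) by ring.
apply: (lt_le_trans (y := b * d.+1%:R * (v - u) * (lam * (c ^+ d + a ^+ d)))).
  by rewrite (_ : b * _ * _ * _ = lam * (d.+1%:R * (c - a) * (c ^+ d + a ^+ d)))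
    ?ltr_pM2l // ca; ring.
have c_ge0 : 0 <= c by rewrite (le_trans base_ge0 (ltW ac)).
rewrite ler_wpM2r ?ler_wpM2r ?subr_ge0 ?(ltW uv) //.
by rewrite mulr_ge0 ?addr_ge0 ?exprn_ge0 ?(ltW lam_gt0).
Qed.

Section PottsFixedPoint.
Variables (R : realFieldType) (q d : nat) (b lam mu : R) (X Y : 'I_q -> R).
Hypotheses (b_gt0 : 0 < b) (d_gt1 : (1 < d)%N) (bd_le_q : b * d.+1%:R <= q%:R).
Hypotheses (lam_gt0 : 0 < lam) (mu_gt0 : 0 < mu).
Hypothesis YE : forall j, Y j = lam * (\sum_k X k - b * X j) ^+ d.
Hypothesis XE : forall j, X j = mu * (\sum_k Y k - b * Y j) ^+ d.
Hypothesis baseX_ge0 : forall j, 0 <= \sum_k X k - b * X j.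
Hypothesis baseY_ge0 : forall j, 0 <= \sum_k Y k - b * Y j.

Definition cross_defect i k := q%:R * (X i * Y k - X k * Y i)
  - (\sum_l X l) * (Y k - Y i) - (\sum_l Y l) * (X i - X k).

Lemma sum_cross_defect i : \sum_k cross_defect i k = 0.
Proof.
rewrite /cross_defect !sumrB -!mulr_sumr !sumrB -mulr_sumr -mulr_suml !sumr_const card_ord.
by move: (\sum_l X l) (\sum_l Y l) (X i) (Y i) => sX sY x y; ring.
Qed.

Lemma Y_lt_of_X_gt i k : X k < X i -> Y i < Y k.
Proof.
move=> Xki; rewrite !YE ltr_pM2l // ltrXn2r -?lt0n ?(ltnW d_gt1) //.
by rewrite ltrD2l ltrN2 ltr_pM2l.
Qed.

Lemma cross_defect_gt0 i k : X k < X i -> 0 < cross_defect i k.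
Proof.
move=> Xki.
have := power_map_gap lam_gt0 b_gt0 d_gt1 bd_le_q (baseX_ge0 i) Xki.
have := power_map_gap mu_gt0 b_gt0 d_gt1 bd_le_q (baseY_ge0 k) (Y_lt_of_X_gt Xki).
rewrite -!XE -!YE /cross_defect; lra.
Qed.

Lemma potts_fixed_point_const : (forall i j, X i = X j) /\ (forall i j, Y i = Y j).
Proof.
suff X_const i j : X i = X j by split=> // i j; rewrite !YE (X_const i j).
have [m _ X_max] := @arg_maxP _ _ _ i predT X isT.
have {}X_max k : X k <= X m := X_max k isT.
have eq_max k : X k = X m.
  apply/eqP; rewrite eq_le X_max leNgt; apply/negP => Xkm.
  have defect_ge0 l : 0 <= cross_defect m l.
    case: (ltrP (X l) (X m)) => [/cross_defect_gt0/ltW // | Xml].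
    have Xl : X l = X m by apply/eqP; rewrite eq_le Xml X_max.
    by rewrite /cross_defect !YE Xl !subrr ?mulr0 ?subr0.
  have := cross_defect_gt0 Xkm.
  by rewrite (psumr_eq0P (fun l _ => defect_ge0 l) (sum_cross_defect m)) ?ltxx.
by rewrite !eq_max.
Qed.

End PottsFixedPoint.

Lemma potts_rhsE (R : realFieldType) (q d : nat) (B : R) (X : 'I_q -> R) j :
  potts_rhs d B X j = (\sum_k X k - (1 - B) * X j) ^+ d.
Proof. by rewrite /potts_rhs [\sum_k X k](bigD1 j) //=; congr (_ ^+ _); ring. Qed.

Lemma potts_base_ge0 (R : realFieldType) (q : nat) (B : R) (X : 'I_q -> R) j :
  0 <= B -> (forall k, 0 <= X k) -> 0 <= \sum_k X k - (1 - B) * X j.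
Proof.
move=> B_ge0 X_ge0.
have -> : \sum_k X k - (1 - B) * X j = B * X j + \sum_(k | k != j) X k.
  by rewrite [\sum_k X k](bigD1 j) //=; ring.
by rewrite addr_ge0 ?mulr_ge0 ?sumr_ge0.
Qed.

Theorem lemma26 (R : realType) (q Delta : nat) (B : R)
  (Rv Cv : 'I_q -> R) :
  0 <= B -> B < 1 -> (3 <= q)%N -> (3 <= Delta)%N ->
  (Delta%:R - q%:R) / Delta%:R <= B ->
  (forall i, 0 < Rv i) -> (forall j, 0 < Cv j) ->
  proportional Rv (potts_rhs (Delta.-1) B Cv) ->
  proportional Cv (potts_rhs (Delta.-1) B Rv) ->
  (forall i j, Rv i = Rv j) /\ (forall i j, Cv i = Cv j).
Proof.
move=> B_ge0 B_lt1 _ Delta_ge3 B_ge Rv_gt0 Cv_gt0 [lam [lam_gt0 hR]] [mu [mu_gt0 hC]].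
have Delta_eq : Delta = (Delta.-1).+1 by rewrite prednK // (leq_trans _ Delta_ge3).
have d_gt1 : (1 < Delta.-1)%N by rewrite -ltnS -Delta_eq.
have b_gt0 : 0 < 1 - B by rewrite subr_gt0.
have bd_le_q : (1 - B) * (Delta.-1).+1%:R <= q%:R.
  have Delta_gt0 : 0 < Delta%:R :> R by rewrite ltr0n (leq_trans _ Delta_ge3).
  by move: B_ge; rewrite -Delta_eq ler_pdivrMr //; lra.
have RvE j : Rv j = lam * (\sum_k Cv k - (1 - B) * Cv j) ^+ Delta.-1.
  by rewrite hR potts_rhsE.
have CvE j : Cv j = mu * (\sum_k Rv k - (1 - B) * Rv j) ^+ Delta.-1.
  by rewrite hC potts_rhsE.
have [C_const R_const] := potts_fixed_point_const b_gt0 d_gt1 bd_le_q lam_gt0 mu_gt0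
  RvE CvE (fun j => potts_base_ge0 j B_ge0 (fun k => ltW (Cv_gt0 k)))
  (fun j => potts_base_ge0 j B_ge0 (fun k => ltW (Rv_gt0 k))).
by split.
Qed.
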